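(* Let $\mathfrak g$ be a Lie algebra over a field $\mathbb k$ and $X$ its associated TSD object (obtained by composing the binary SD operation). The homomorphism $\Theta^2\colon H^2_{\rm Lie}(\mathfrak g;\mathfrak g)\to H^2_{\rm TSD}(X;X)$ induced by $\Theta^2(\phi)((a,x)\otimes(b,y)\otimes(c,z))=(0,\ b\phi(x,z)+c\phi(x,y)+[\phi(x,y),z]+\phi([x,y],z))$ is injective.
   Context: $X=\mathbb k\oplus\mathfrak g$, $\Delta(a,x)=(a,x)\otimes(1,0)+(1,0)\otimes(0,x)$, $\Delta_3=(\Delta\otimes\mathbb 1)\Delta$, $q((a,x)\otimes(b,y))=(ab,bx+[x,y])$, $T=q\circ(q\otimes\mathbb 1)$, so $T((a,x)\otimes(b,y)\otimes(c,z))=(abc,bcx+c[x,y]+b[x,z]+[[x,y],z])$. TSD cohomology: with $\sigma$ sending $u_1\otimes\cdots\otimes u_9$ to $u_1\otimes u_4\otimes u_7\otimes u_2\otimes u_5\otimes u_8\otimes u_3\otimes u_6\otimes u_9$: $C^1_{\rm TSD}$ = linear $f$ with $\Delta_3 f=(f\otimes\mathbb 1\otimes\mathbb 1+\mathbb 1\otimes f\otimes\mathbb 1+\mathbb 1\otimes\mathbb 1\otimes f)\Delta_3$; $C^2_{\rm TSD}$ = linear $\psi\colon X^{\otimes 3}\to X$ with $\Delta_3\psi=(\psi\otimes T\otimes T+T\otimes\psi\otimes T+T\otimes T\otimes\psi)\sigma\Delta_3^{\otimes3}$; $\delta^1 f(x\otimes y\otimes z)=f(T(x\otimes y\otimes z))-T(f(x)\otimes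 y\otimes z)-T(x\otimes f(y)\otimes z)-T(x\otimes y\otimes f(z))$; $\delta^2\psi(x\otimes y\otimes z\otimes w\otimes u)=T(\psi(x\otimes y\otimes z)\otimes w\otimes u)+\psi(T(x\otimes y\otimes z)\otimes w\otimes u)-\psi(A_1\otimes A_2\otimes A_3)-T(\Psi_1\otimes A_2\otimes A_3)-T(A_1\otimes\Psi_2\otimes A_3)-T(A_1\otimes A_2\otimes\Psi_3)$, $A_i=T(x_i\otimes w^{(i)}\otimes u^{(i)})$ with $(x_1,x_2,x_3)=(x,y,z)$, $\Psi_i$ likewise with $\psi$; $H^2_{\rm TSD}=(C^2\cap\ker\delta^2)/\delta^1(C^1)$. Lie cohomology: alternating bilinear $2$-cochains $\phi$, $\delta^2\phi(x,y,z)=[\phi(x,y),z]+[\phi(y,z),x]+[\phi(z,x),y]+\phi([x,y],z)+\phi([y,z],x)+\phi([z,x],y)$, $\delta^1f(x,y)=f([x,y])-[f(x),y]-[x,f(y)]$, $H^2_{\rm Lie}=\ker\delta^2/\operatorname{im}\delta^1$. *)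

From HB Require Import structures.
From mathcomp Require Import all_boot all_order all_algebra.
Set Implicit Arguments. Unset Strict Implicit. Unset Printing Implicit Defensive.
Import GRing.Theory.
Local Open Scope ring_scope.

Section TSD.
Variables (k : fieldType) (g : lmodType k) (br : g -> g -> g).

Definition is_lie_bracket :=
  [/\ forall x : g, linear (br x),
      forall y : g, linear (fun x => br x y),
      forall x : g, br x x = 0
    & forall x y z : g, br (br x y) z + br (br y z) x + br (br z x) y = 0].

Definition X := (k^o * g)%type.

Definition Xe : X := (1 : k^o, 0 : g).
Definition Xpi (v : X) : X := (0 : k^o, v.2).

(* Delta(a,x) = (a,x)(x)(1,0) + (1,0)(x)(0,x), as a formal sum of pure tensors;
   Delta_3 = (Delta (x) 1) Delta, applied termwise. *)
Definition Delta (v : X) : seq (X * X) := [:: (v, Xe); (Xe, Xpi v)].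
Definition Delta3 (v : X) : seq (X * X * X) :=
  flatten [seq [seq (w.1, w.2, u.2) | w <- Delta u.1] | u <- Delta v].

Definition q (u v : X) : X := ((u.1 : k) * v.1 : k^o, (v.1 : k) *: u.2 + br u.2 v.2).
Definition T (u v w : X) : X := q (q u v) w.

(* Elements of X^{(x)3} are represented by finite formal sums of pure tensors;
   two such sums are equal in X (x) X (x) X iff all pure-tensor functionals
   alpha (x) beta (x) gamma (alpha, beta, gamma linear forms on X) agree. *)
Definition tev (al be ga : X -> k) (s : seq (X * X * X)) : k :=
  \sum_(t <- s) al t.1.1 * be t.1.2 * ga t.2.
Definition teq (s t : seq (X * X * X)) : Prop :=
  forall al be ga : {scalar X}, tev al be ga s = tev al be ga t.

Definition C1_TSD (f : X -> X) : Prop :=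
  forall v : X,
    teq (Delta3 (f v))
        ([seq (f t.1.1, t.1.2, t.2) | t <- Delta3 v] ++
         [seq (t.1.1, f t.1.2, t.2) | t <- Delta3 v] ++
         [seq (t.1.1, t.1.2, f t.2) | t <- Delta3 v]).

Definition delta1_TSD (f : X -> X) (x y z : X) : X :=
  f (T x y z) - T (f x) y z - T x (f y) z - T x y (f z).

Definition lie_2cochain (phi : g -> g -> g) : Prop :=
  [/\ forall x, linear (phi x), forall y, linear (fun x => phi x y)
    & forall x, phi x x = 0].
Definition delta2_Lie (phi : g -> g -> g) (x y z : g) : g :=
  br (phi x y) z + br (phi y z) x + br (phi z x) y
  + phi (br x y) z + phi (br y z) x + phi (br z x) y.
Definition delta1_Lie (f : g -> g) (x y : g) : g :=
  f (br x y) - br (f x) y - br x (f y).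

Definition Theta2 (phi : g -> g -> g) (u v w : X) : X :=
  (0 : k^o, (v.1 : k) *: phi u.2 w.2 + (w.1 : k) *: phi u.2 v.2
            + br (phi u.2 v.2) w.2 + phi (br u.2 v.2) w.2).

End TSD.

From HB Require Import structures.
From mathcomp Require Import all_boot all_order all_algebra.
Set Implicit Arguments. Unset Strict Implicit. Unset Printing Implicit Defensive.
Local Open Scope ring_scope.
Import GRing.Theory.

(* Suppose Theta^2 phi = delta^1 f and write f (1,0) = (c, z).  Evaluating both sides
   at the triples ((0,x),(0,x),(1,0)), ((1,0),(1,0),(0,w)) and ((0,x),(0,y),(1,0))
   shows in turn that f maps g into g, that z is central, and that phi is the Lie
   coboundary of x |-> (f (0,x)).2 + c x. *)

Section LinearOf.
Variables (R : pzRingType) (U V : lmodType R) (h : U -> V).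
Hypothesis Lh : linear h.

Let hL : {linear U -> V} := HB.pack h (GRing.isLinear.Build R U V *:%R h Lh).

Lemma linear0_of : h 0 = 0. Proof. exact: (linear0 hL). Qed.
Lemma linearD_of u v : h (u + v) = h u + h v. Proof. exact: (linearD hL). Qed.
Lemma linearZ_of a u : h (a *: u) = a *: h u. Proof. exact: (linearZ_LR hL). Qed.

End LinearOf.

Section AlternatingBilinear.
Variables (k : fieldType) (g : lmodType k) (b : g -> g -> g).
Hypothesis Hb : lie_2cochain b.

Lemma cochain0r x : b x 0 = 0.
Proof. by case: Hb => Lr _ _; exact: linear0_of. Qed.

Lemma cochain0l y : b 0 y = 0.
Proof. by case: Hb => _ Ll _; have := linear0_of (Ll y). Qed.

Lemma cochainDl x y z : b (x + y) z = b x z + b y z.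
Proof. by case: Hb => _ Ll _; exact: (linearD_of (Ll z)). Qed.

Lemma cochainZl a x y : b (a *: x) y = a *: b x y.
Proof. by case: Hb => _ Ll _; exact: (linearZ_of (Ll y)). Qed.

Lemma cochainDr x y z : b x (y + z) = b x y + b x z.
Proof. by case: Hb => Lr _ _; exact: linearD_of. Qed.

Lemma cochainZr a x y : b x (a *: y) = a *: b x y.
Proof. by case: Hb => Lr _ _; exact: linearZ_of. Qed.

Lemma cochain_alt x : b x x = 0.
Proof. by case: Hb. Qed.

Lemma cochain_antisym x y : b x y = - b y x.
Proof.
apply/eqP; rewrite -subr_eq0 opprK.
have := cochain_alt (x + y).
by rewrite cochainDr !cochainDl !cochain_alt add0r addr0 addrC => ->.
Qed.

End AlternatingBilinear.

Lemma lie_bracket_cochain (k : fieldType) (g : lmodType k) (br : g -> g -> g) :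
  is_lie_bracket br -> lie_2cochain br.
Proof. by case. Qed.

Section ThetaCoboundary.
Variables (k : fieldType) (g : lmodType k) (br : g -> g -> g) (phi : g -> g -> g).
Variable f : {linear X g -> X g}.
Hypotheses (Hbr : lie_2cochain br) (Hphi : lie_2cochain phi).
Hypothesis Htheta : forall u v w : X g, Theta2 br phi u v w = delta1_TSD br f u v w.

Lemma T_pairE (u v w : X g) : T br u v w =
  ((u.1 * v.1 * w.1 : k) : k^o,
   (v.1 * w.1) *: u.2 + w.1 *: br u.2 v.2 + v.1 *: br u.2 w.2 + br (br u.2 v.2) w.2).
Proof.
by rewrite /T /q /= (cochainDl Hbr) (cochainZl Hbr) scalerDr scalerA (mulrC w.1) !addrA.
Qed.

Let Xin (x : g) : X g := (0 : k^o, x).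
Let c : k := (f (Xe g)).1.
Let z : g := (f (Xe g)).2.

Let fXe : f (Xe g) = (c, z). Proof. by rewrite /c /z; case: (f _). Qed.
Let f0 : f (0 : k^o, 0) = 0. Proof. exact: linear0. Qed.

Let simpl_cochains :=
  (mul0r, mulr0, mulr1, scale0r, scale1r, scaler0, add0r, addr0, subr0,
   cochain0l Hbr, cochain0r Hbr, cochain0l Hphi, cochain0r Hphi,
   cochain_alt Hbr, cochain_alt Hphi).

Lemma fst_f_Xin x : (f (Xin x)).1 = 0.
Proof.
have := congr1 snd (Htheta (Xin x) (Xin x) (Xe g)).
rewrite /Theta2 /delta1_TSD !T_pairE fXe /= !simpl_cochains f0 /=.
rewrite (cochain_antisym Hbr x) opprB sub0r addKr => /eqP.
rewrite eq_sym oppr_eq0 scaler_eq0 => /orP[/eqP // | /eqP ->].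
by rewrite f0.
Qed.

Lemma snd_f_Xe_central w : br z w = 0.
Proof.
have := congr1 snd (Htheta (Xe g) (Xe g) (Xin w)).
rewrite /Theta2 /delta1_TSD !T_pairE fXe /= !simpl_cochains f0 /=.
by rewrite sub0r => /esym/eqP; rewrite oppr_eq0 => /eqP.
Qed.

Lemma phi_f_formula x y :
  phi x y = (f (Xin (br x y))).2 - br (f (Xin x)).2 y - br x (f (Xin y)).2
            - c *: br x y.
Proof.
have := congr1 snd (Htheta (Xin x) (Xin y) (Xe g)).
rewrite /Theta2 /delta1_TSD !T_pairE fXe /= !simpl_cochains fst_f_Xin.
by rewrite scale0r add0r (cochain_antisym Hbr _ z) snd_f_Xe_central oppr0 addr0.
Qed.

Definition lie_primitive (x : g) : g := (f (Xin x)).2 + c *: x.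

Lemma lie_primitive_linear : linear lie_primitive.
Proof.
move=> a u v; rewrite /lie_primitive.
have -> : Xin (a *: u + v) = a *: Xin u + Xin v.
  by apply: injective_projections; rewrite /= ?scaler0 ?addr0.
by rewrite linearP /= !scalerDr !scalerA mulrC addrACA.
Qed.

HB.instance Definition _ :=
  GRing.isLinear.Build k g g *:%R lie_primitive lie_primitive_linear.

Lemma lie_primitive_coboundary x y : phi x y = delta1_Lie br lie_primitive x y.
Proof.
rewrite phi_f_formula /delta1_Lie /lie_primitive.
rewrite (cochainDl Hbr) (cochainZl Hbr) (cochainDr Hbr) (cochainZr Hbr).
by rewrite !opprD !addrA (addrAC _ (c *: br x y)) addrK.
Qed.

End ThetaCoboundary.

Theorem mainTheorem8 (k : fieldType) (g : lmodType k) (br : g -> g -> g)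
  (Hlie : is_lie_bracket br)
  (phi : g -> g -> g) (Hphi : lie_2cochain phi)
  (Hcoc : forall x y z : g, delta2_Lie br phi x y z = 0) :
  (exists f : {linear X g -> X g},
      C1_TSD f /\
      forall u v w : X g, Theta2 br phi u v w = delta1_TSD br f u v w) ->
  exists h : {linear g -> g}, forall x y : g, phi x y = delta1_Lie br h x y.
Proof.
case=> f [_ Htheta]; exists (lie_primitive f).
exact: lie_primitive_coboundary (lie_bracket_cochain Hlie) Hphi Htheta.
Qed.
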